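(* There is an absolute constant $c>0$ such that for all $n$, $p\in(0,1)$, $q\in(0,1]$ and $\epsilon>0$, $$\mathrm{CCU}^{\mu_p}_{\frac12-\epsilon}(\mathcal F_q)\ge\mathrm{CC}^{\nu_{p,q}}_{\frac12-\epsilon+\epsilon'}(F),\qquad\epsilon'=2^{-cqn}.$$
   Context: For $S\subseteq[n]$, $f_S(x,y)=\bigoplus_{i\in S}(x_i\oplus y_i)$. $\mathcal F_q=\{(f_S,f_T): |S\triangle T|\le qn\}$. $\mu_p$: $x$ uniform in $\{0,1\}^n$, $y$ obtained from $x$ by flipping each bit independently with probability $p$. $\nu_{p,q}$ is the distribution on Alice-input $(S,x)$ and Bob-input $(T,y)$ ($S,T\subseteq[n]$, $x,y\in\{0,1\}^n$) where $S$ is a uniformly random subset of $[n]$, $T$ is obtained from $S$ by flipping the membership of each $i\in[n]$ independently with probability $q/2$, and $(x,y)\sim\mu_p$ independently of $(S,T)$. $F((S,x),(T,y))=f_T(x,y)=\bigoplus_{i\in T}(x_i\oplus y_i)$. $\mathrm{CC}^{\nu}_\epsilon(F)$ is the minimum communication of a (two-way) protocol between Alice and Bob whose output differs from $F$ with probability at most $\epsilon$ under $\nu$. Uncertain setting: Alice receives $(f,x)$, Bob receives $(g,y)$, with shared public randomness; a public-coin protocol $\epsilon$-computes $\mathcal F$ under $\mu$ if for every $(f,g)\in\mathcal F$ the probability over $(x,y)\sim\mu$ and coins that Bob's output differs from $g(x,y)$ is at most $\epsilon$; $\mathrm{CCU}^\mu_\epsilon(\mathcal F)$ is the minimum over such protocols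 of the worst-case number of bits communicated over all $(f,g)\in\mathcal F$, $(x,y)$ in the support of $\mu$ and coin settings. *)

From mathcomp Require Import all_boot.
From Stdlib Require Import Reals.

Set Implicit Arguments.
Unset Strict Implicit.
Unset Printing Implicit Defensive.

Definition Rsum (T : finType) (F : T -> R) : R := \big[Rplus/R0]_(x : T) F x.

(* A protocol tree: internal nodes are Alice or Bob sending one bit that depends
   on its own input (and, through the position in the tree, on the transcript);
   at a leaf, Bob outputs a bit depending on the transcript (leaf) and his input. *)
Inductive proto (A B : Type) : Type :=
| Out   of (B -> bool)
| ASend of (A -> bool) & proto A B & proto A B
| BSend of (B -> bool) & proto A B & proto A B.

Arguments Out {A B}.
Arguments ASend {A B}.
Arguments BSend {A B}.

Fixpoint run (A B : Type) (t : proto A B) (a : A) (b : B) : bool :=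
  match t with
  | Out o => o b
  | ASend f t0 t1 => if f a then run t1 a b else run t0 a b
  | BSend g t0 t1 => if g b then run t1 a b else run t0 a b
  end.

Fixpoint bits (A B : Type) (t : proto A B) (a : A) (b : B) : nat :=
  match t with
  | Out _ => 0
  | ASend f t0 t1 => (if f a then bits t1 a b else bits t0 a b).+1
  | BSend g t0 t1 => (if g b then bits t1 a b else bits t0 a b).+1
  end.

Definition bv (n : nat) := {ffun 'I_n -> bool}.

Definition hamming (n : nat) (x y : bv n) : nat := #|[set i | x i != y i]|.
Definition symdiff (n : nat) (S T : {set 'I_n}) : {set 'I_n} := (S :\: T) :|: (T :\: S).

Definition fS (n : nat) (S : {set 'I_n}) (x y : bv n) : bool :=
  \big[addb/false]_(i in S) (x i (+) y i).

Definition fSfun (n : nat) (S : {set 'I_n}) : {ffun bv n * bv n -> bool} :=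
  [ffun xy => fS S xy.1 xy.2].

Definition Fq (n : nat) (q : R) (f g : {ffun bv n * bv n -> bool}) : Prop :=
  exists S T : {set 'I_n},
    f = fSfun S /\ g = fSfun T /\ (INR #|symdiff S T| <= q * INR n)%R.

(* mu_p(x,y): x uniform, y = x with each bit flipped independently w.p. p *)
Definition mu (n : nat) (p : R) (x y : bv n) : R :=
  (/ 2 ^ n * p ^ hamming x y * (1 - p) ^ (n - hamming x y)%nat)%R.

Definition nu (n : nat) (p q : R) (Sx Ty : {set 'I_n} * bv n) : R :=
  (/ 2 ^ n * (q / 2) ^ #|symdiff Sx.1 Ty.1| * (1 - q / 2) ^ (n - #|symdiff Sx.1 Ty.1|)%nat
     * mu p Sx.2 Ty.2)%R.

Definition Ffun (n : nat) (Sx Ty : {set 'I_n} * bv n) : bool := fS Ty.1 Sx.2 Ty.2.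

(* CC_le n p q eps k  <->  CC^{nu_{p,q}}_eps(F) <= k : there is a deterministic
   two-way protocol communicating at most k bits on every input whose output
   differs from F with probability at most eps under nu_{p,q}. *)
Definition CC_le (n : nat) (p q eps : R) (k : nat) : Prop :=
  exists t : proto ({set 'I_n} * bv n) ({set 'I_n} * bv n),
    (forall a b, (bits t a b <= k)%nat) /\
    (Rsum (fun ab : ({set 'I_n} * bv n) * ({set 'I_n} * bv n) =>
       if run t ab.1 ab.2 != Ffun ab.1 ab.2 then nu p q ab.1 ab.2 else R0) <= eps)%R.

Definition UIn (n : nat) := ({ffun bv n * bv n -> bool} * bv n)%type.

(* CCU_le n p q eps k  <->  CCU^{mu_p}_eps(F_q) <= k : there is a public-coin
   protocol (a finitely supported distribution w over deterministic protocols P i)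
   which eps-computes F_q under mu_p and communicates at most k bits for every
   (f,g) in F_q, every (x,y) in the support of mu_p and every coin setting. *)
Definition CCU_le (n : nat) (p q eps : R) (k : nat) : Prop :=
  exists (m : nat) (w : 'I_m -> R) (P : 'I_m -> proto (UIn n) (UIn n)),
    (forall i, 0 <= w i)%R /\ Rsum w = 1%R /\
    (forall f g, Fq q f g ->
       (Rsum (fun i => w i * Rsum (fun xy : bv n * bv n =>
           if run (P i) (f, xy.1) (g, xy.2) != g xy then mu p xy.1 xy.2 else R0))
        <= eps)%R) /\
    (forall f g, Fq q f g -> forall (x y : bv n), (0 < mu p x y)%R ->
       forall i, (bits (P i) (f, x) (g, y) <= k)%nat).

From mathcomp Require Import all_boot all_order.
From Stdlib Require Import Reals Lra.
From mathcomp Require Import Rstruct.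

(* Alice and Bob run the uncertain protocol on the functions (f_S, f_T) they
   hold; on every pair with |S △ T| <= q n this errs with probability at most
   1/2 - eps, averaged over the public coins, and fixing the best coins gives a
   deterministic protocol.  Pairs with |S △ T| > q n have nu-mass at most
   2^{-q n} E[2^{|S △ T|}] = 2^{-q n} (1 + q/2)^n <= 2^{-(1 - 1/(2 ln 2)) q n}
   by Markov's inequality and 1 + x <= e^x. *)

Set Implicit Arguments.
Unset Strict Implicit.
Unset Printing Implicit Defensive.

Open Scope R_scope.

Section Protocols.

Variables A B A' B' : Type.

Fixpoint proto_map (ja : A' -> A) (jb : B' -> B) (t : proto A B) : proto A' B' :=
  match t with
  | Out o => Out (fun b => o (jb b))
  | ASend f t0 t1 => ASend (fun a => f (ja a)) (proto_map ja jb t0) (proto_map ja jb t1)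
  | BSend g t0 t1 => BSend (fun b => g (jb b)) (proto_map ja jb t0) (proto_map ja jb t1)
  end.

Lemma run_proto_map ja jb t a b : run (proto_map ja jb t) a b = run t (ja a) (jb b).
Proof.
elim: t => [o|f t0 IH0 t1 IH1|g t0 IH0 t1 IH1] //=; first by case: (f (ja a)).
by case: (g (jb b)).
Qed.

Lemma bits_proto_map ja jb t a b : bits (proto_map ja jb t) a b = bits t (ja a) (jb b).
Proof.
elim: t => [o|f t0 IH0 t1 IH1|g t0 IH0 t1 IH1] //=; first by case: (f (ja a)); rewrite ?IH0 ?IH1.
by case: (g (jb b)); rewrite ?IH0 ?IH1.
Qed.

Fixpoint proto_trunc (k : nat) (t : proto A B) : proto A B :=
  match t, k with
  | Out o, _ => Out o
  | _, 0 => Out (fun _ => false)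
  | ASend f t0 t1, k'.+1 => ASend f (proto_trunc k' t0) (proto_trunc k' t1)
  | BSend g t0 t1, k'.+1 => BSend g (proto_trunc k' t0) (proto_trunc k' t1)
  end.

Lemma bits_proto_trunc k t a b : (bits (proto_trunc k t) a b <= k)%nat.
Proof.
elim: t k => [o|f t0 IH0 t1 IH1|g t0 IH0 t1 IH1] [|k] //=.
  by case: (f a); [apply: IH1 | apply: IH0].
by case: (g b); [apply: IH1 | apply: IH0].
Qed.

Lemma run_proto_trunc k t a b :
  (bits t a b <= k)%nat -> run (proto_trunc k t) a b = run t a b.
Proof.
elim: t k => [o|f t0 IH0 t1 IH1|g t0 IH0 t1 IH1] [|k] //=.
  by case: (f a) => H; [apply: IH1 | apply: IH0].
by case: (g b) => H; [apply: IH1 | apply: IH0].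
Qed.

End Protocols.

Lemma Rsum_le (T : finType) (P : pred T) (F G : T -> R) :
  (forall i, P i -> F i <= G i) ->
  \big[Rplus/0]_(i | P i) F i <= \big[Rplus/0]_(i | P i) G i.
Proof. by move=> H; apply: (big_ind2 (fun x y => x <= y)) => // *; lra. Qed.

Lemma Rsum_ge0 (T : finType) (P : pred T) (F : T -> R) :
  (forall i, P i -> 0 <= F i) -> 0 <= \big[Rplus/0]_(i | P i) F i.
Proof. by move=> H; apply: (big_ind (fun x => 0 <= x)) => // *; lra. Qed.

Lemma Rsum_const (T : finType) (c : R) : \big[Rplus/0]_(i : T) c = INR #|T| * c.
Proof.
rewrite big_const; elim: #|T| => [|k IH]; first by rewrite /=; ring.
by rewrite iterS IH S_INR; ring.
Qed.

Lemma exists_le_Rsum_avg (m : nat) (w E : 'I_m -> R) :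
  (forall i, 0 <= w i) -> Rsum w = 1 ->
  exists i, E i <= Rsum (fun i => w i * E i).
Proof.
move=> w_ge0 w_sum1; case: m w E w_ge0 w_sum1 => [|m] w E w_ge0.
  by rewrite /Rsum big_ord0; lra.
move=> w_sum1.
case: (Order.TotalTheory.arg_minP (P := xpredT) E (i0 := ord0) (erefl true)) => i _ Emin.
exists i; rewrite -[E i]Rmult_1_l -w_sum1 /Rsum big_distrl /=.
apply: Rsum_le => j _; apply: Rmult_le_compat_l => //.
exact/RleP/Emin.
Qed.
Lemma iter_Rmult (a : R) k : iter k (Rmult a) 1 = a ^ k.
Proof. by elim: k => //= k ->. Qed.

Lemma Rprod_if (n : nat) (c : pred 'I_n) (a b : R) :
  \big[Rmult/1]_(i < n) (if c i then a else b) =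
  a ^ #|[set i | c i]| * b ^ (n - #|[set i | c i]|).
Proof.
rewrite (bigID c) /= (eq_bigr (fun _ => a)) => [|i ->] //.
rewrite [X in _ * X](eq_bigr (fun _ => b)) => [|i /negbTE ->] //.
rewrite !big_const !iter_Rmult cardsE; congr (_ * _ ^ _).
by have := cardC c; rewrite card_ord; move: #|c| #|predC c| => u v <-; rewrite addKn.
Qed.

Lemma Rsum_pow_hamming (n : nat) (x : bv n) (a b : R) :
  \big[Rplus/0]_(y : bv n) (a ^ hamming x y * b ^ (n - hamming x y)) = (a + b) ^ n.
Proof.
transitivity (\big[Rmult/1]_(i < n) \big[Rplus/0]_(j : bool) (if x i != j then a else b)).
  by rewrite bigA_distr_bigA; apply: eq_bigr => y _; rewrite Rprod_if.
rewrite (eq_bigr (fun _ => a + b)) => [|i _]; last by rewrite big_bool; case: (x i) => /=; lra.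
by rewrite big_const_ord iter_Rmult.
Qed.

Lemma Rsum_pow_symdiff (n : nat) (S : {set 'I_n}) (a b : R) :
  \big[Rplus/0]_(T : {set 'I_n}) (a ^ #|symdiff S T| * b ^ (n - #|symdiff S T|)) = (a + b) ^ n.
Proof.
have set_of_bvK : cancel (fun t : bv n => [set i | t i]) (fun T : {set 'I_n} => [ffun i => i \in T] : bv n).
  by move=> t; apply/ffunP => i; rewrite ffunE inE.
have bv_of_setK : cancel (fun T : {set 'I_n} => [ffun i => i \in T] : bv n) (fun t : bv n => [set i | t i]).
  by move=> T; apply/setP => i; rewrite inE ffunE.
rewrite (reindex _ (onW_bij _ (Bijective set_of_bvK bv_of_setK))) /=.
rewrite -(Rsum_pow_hamming [ffun i => i \in S]); apply: eq_bigr => t _.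
have -> // : #|symdiff S [set i | t i]| = hamming [ffun i => i \in S] t.
by apply: eq_card => i; rewrite !inE ffunE; case: (i \in S); case: (t i).
Qed.

Lemma card_bv (n : nat) : #|bv n| = expn 2 n.
Proof. by rewrite card_ffun card_bool card_ord. Qed.

Lemma card_setI (n : nat) : #|{set 'I_n}| = expn 2 n.
Proof. by rewrite -cardsT -powersetT card_powerset cardsT card_ord. Qed.

Lemma INR_pow2 (n : nat) : INR (expn 2 n) = 2 ^ n.
Proof. by elim: n => [|n IH] //; rewrite expnS mult_INR IH /=; ring. Qed.

Lemma mu_gt0 (n : nat) (p : R) (x y : bv n) : 0 < p < 1 -> 0 < mu p x y.
Proof.
move=> [p_gt0 p_lt1]; rewrite /mu.
by repeat apply: Rmult_lt_0_compat; try apply: Rinv_0_lt_compat; apply: pow_lt; lra.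
Qed.

Lemma Rsum_mu (n : nat) (p : R) :
  \big[Rplus/0]_(x : bv n) \big[Rplus/0]_(y : bv n) mu p x y = 1.
Proof.
have pow2_neq0 : 2 ^ n <> 0 by apply: pow_nonzero; lra.
rewrite (eq_bigr (fun _ => / 2 ^ n)) => [|x _].
  by rewrite Rsum_const card_bv INR_pow2; field.
transitivity (/ 2 ^ n * (p + (1 - p)) ^ n); last by rewrite Rplus_minus pow1 Rmult_1_r.
by rewrite -(Rsum_pow_hamming x) big_distrr; apply: eq_bigr => y _; rewrite /mu Rmult_assoc.
Qed.

Definition nuS (n : nat) (q : R) (S T : {set 'I_n}) : R :=
  / 2 ^ n * (q / 2) ^ #|symdiff S T| * (1 - q / 2) ^ (n - #|symdiff S T|).

Lemma nuE (n : nat) (p q : R) (S T : {set 'I_n}) (x y : bv n) :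
  nu p q (S, x) (T, y) = nuS q S T * mu p x y.
Proof. by []. Qed.

Lemma nuS_ge0 (n : nat) (q : R) (S T : {set 'I_n}) : 0 <= q <= 1 -> 0 <= nuS q S T.
Proof.
move=> [q_ge0 q_le1]; rewrite /nuS.
repeat apply: Rmult_le_pos; try (apply: pow_le; lra).
by left; apply/Rinv_0_lt_compat/pow_lt; lra.
Qed.

Lemma Rsum_nuS_pow (n : nat) (q lam : R) :
  \big[Rplus/0]_(S : {set 'I_n}) \big[Rplus/0]_(T : {set 'I_n})
     (nuS q S T * lam ^ #|symdiff S T|) = (lam * (q / 2) + (1 - q / 2)) ^ n.
Proof.
have pow2_neq0 : 2 ^ n <> 0 by apply: pow_nonzero; lra.
rewrite (eq_bigr (fun _ => / 2 ^ n * (lam * (q / 2) + (1 - q / 2)) ^ n)) => [|S _].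
  by rewrite Rsum_const card_setI INR_pow2; field.
rewrite -(Rsum_pow_symdiff S) big_distrr; apply: eq_bigr => T _.
by rewrite /nuS Rpow_mult_distr /=; ring.
Qed.

Definition close (n : nat) (q : R) (S T : {set 'I_n}) : bool :=
  if Rle_dec (INR #|symdiff S T|) (q * INR n) then true else false.

Lemma closeP (n : nat) (q : R) (S T : {set 'I_n}) :
  reflect (INR #|symdiff S T| <= q * INR n) (close q S T).
Proof. by rewrite /close; case: Rle_dec => h; constructor. Qed.

Lemma one_le_Rpower2_excess (r : R) (d : nat) : r < INR d -> 1 <= Rpower 2 (- r) * 2 ^ d.
Proof.
move=> r_lt_d; have ln2_gt_half := ln_lt_2.
rewrite -Rpower_pow; last lra.
rewrite -Rpower_plus /Rpower.
have : 0 < (- r + INR d) * ln 2 by apply: Rmult_lt_0_compat; lra.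
by have := exp_ineq1_le ((- r + INR d) * ln 2); lra.
Qed.

Definition far_rate : R := 1 - / (2 * ln 2).

Lemma far_rate_gt0 : 0 < far_rate.
Proof.
have ln2_gt_half := ln_lt_2; rewrite /far_rate.
suff : / (2 * ln 2) < 1 by lra.
by rewrite -Rinv_1; apply: Rinv_lt_contravar; lra.
Qed.

Lemma exp_pow (x : R) (n : nat) : exp x ^ n = exp (INR n * x).
Proof.
elim: n => [|n IH]; first by rewrite /= Rmult_0_l exp_0.
by rewrite S_INR -tech_pow_Rmult IH -exp_plus; congr exp; ring.
Qed.

(* 1 + q/2 <= e^{q/2} = 2^{q / (2 ln 2)}. *)
Lemma Rpower2_mul_pow_le (n : nat) (q : R) :
  0 < q -> Rpower 2 (- (q * INR n)) * (1 + q / 2) ^ n <= Rpower 2 (- (far_rate * q * INR n)).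
Proof.
move=> q_gt0; have ln2_gt_half := ln_lt_2.
apply: (Rle_trans _ (Rpower 2 (- (q * INR n)) * exp (q / 2) ^ n)).
  apply/Rmult_le_compat_l/pow_incr; first by left; apply: exp_pos.
  by split; [lra | apply: exp_ineq1_le].
rewrite exp_pow /Rpower -exp_plus /far_rate; right; congr exp; field; lra.
Qed.

Lemma far_mass_le (n : nat) (q : R) : 0 < q <= 1 ->
  \big[Rplus/0]_(S : {set 'I_n}) \big[Rplus/0]_(T : {set 'I_n})
     (if close q S T then 0 else nuS q S T) <= Rpower 2 (- (far_rate * q * INR n)).
Proof.
move=> q_bounds.
set r := Rpower 2 (- (q * INR n)).
apply: (Rle_trans _ (\big[Rplus/0]_(S : {set 'I_n}) \big[Rplus/0]_(T : {set 'I_n})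
                       (r * (nuS q S T * 2 ^ #|symdiff S T|)))).
  apply: Rsum_le => S _; apply: Rsum_le => T _.
  have nuS_pos := @nuS_ge0 _ q S T (ltac:(lra)).
  have r_gt0 : 0 < r by apply: exp_pos.
  case: closeP => [_ | /Rnot_le_lt far].
    by apply/Rmult_le_pos/Rmult_le_pos => //; [lra | apply: pow_le; lra].
  rewrite -Rmult_assoc (Rmult_comm r) Rmult_assoc -{1}(Rmult_1_r (nuS q S T)).
  exact/Rmult_le_compat_l/one_le_Rpower2_excess.
rewrite (eq_bigr (fun S => r * \big[Rplus/0]_(T : {set 'I_n}) (nuS q S T * 2 ^ #|symdiff S T|)));
  last by move=> S _; rewrite big_distrr.
rewrite -big_distrr Rsum_nuS_pow.
have -> : 2 * (q / 2) + (1 - q / 2) = 1 + q / 2 by field.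
by apply: Rpower2_mul_pow_le; lra.
Qed.

Lemma Rsum_pair_pair (I J : finType) (F : I * J -> I * J -> R) :
  \big[Rplus/0]_(ab : (I * J) * (I * J)) F ab.1 ab.2 =
  \big[Rplus/0]_(S : I) \big[Rplus/0]_(T : I) \big[Rplus/0]_(x : J) \big[Rplus/0]_(y : J)
     F (S, x) (T, y).
Proof.
rewrite -(pair_bigA _ F).
transitivity (\big[Rplus/0]_(S : I) \big[Rplus/0]_(x : J) \big[Rplus/0]_(T : I)
                \big[Rplus/0]_(y : J) F (S, x) (T, y)); last first.
  by apply: eq_bigr => S _; apply: exchange_big.
rewrite (pair_bigA _ (fun S x => \big[Rplus/0]_(T : I) \big[Rplus/0]_(y : J) F (S, x) (T, y))).
apply: eq_bigr => [[S x]] _.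
by rewrite (pair_bigA _ (fun T y => F (S, x) (T, y))); apply: eq_bigr => [[T y]].
Qed.

Lemma close_mixture_le (n : nat) (q delta : R) (X : {set 'I_n} -> {set 'I_n} -> R) :
  0 < q <= 1 -> 0 <= delta -> (forall S T, close q S T -> X S T <= delta) ->
  \big[Rplus/0]_(S : {set 'I_n}) \big[Rplus/0]_(T : {set 'I_n})
     (if close q S T then nuS q S T * X S T else nuS q S T)
  <= delta + Rpower 2 (- (far_rate * q * INR n)).
Proof.
move=> q_bounds delta_ge0 X_close.
apply: (Rle_trans _ (\big[Rplus/0]_(S : {set 'I_n}) \big[Rplus/0]_(T : {set 'I_n})
   (delta * (nuS q S T * 1 ^ #|symdiff S T|) + if close q S T then 0 else nuS q S T))).
  apply: Rsum_le => S _; apply: Rsum_le => T _.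
  have nuS_pos := @nuS_ge0 _ q S T (ltac:(lra)).
  rewrite pow1 Rmult_1_r; case: ifP => [/X_close X_le | _].
    by rewrite Rplus_0_r (Rmult_comm delta); apply: Rmult_le_compat_l.
  by have := Rmult_le_pos _ _ delta_ge0 nuS_pos; lra.
rewrite (eq_bigr (fun S => delta * \big[Rplus/0]_(T : {set 'I_n}) (nuS q S T * 1 ^ #|symdiff S T|)
   + \big[Rplus/0]_(T : {set 'I_n}) (if close q S T then 0 else nuS q S T))) => [|S _];
  last by rewrite big_split -big_distrr.
rewrite big_split -big_distrr /= Rsum_nuS_pow.
have -> : 1 * (q / 2) + (1 - q / 2) = 1 by field.
by rewrite pow1 Rmult_1_r; apply/Rplus_le_compat_l/far_mass_le.
Qed.

Definition SIn (n : nat) := ({set 'I_n} * bv n)%type.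

Definition cc_err (n : nat) (p q : R) (t : proto (SIn n) (SIn n)) : R :=
  Rsum (fun ab : SIn n * SIn n =>
    if run t ab.1 ab.2 != Ffun ab.1 ab.2 then nu p q ab.1 ab.2 else R0).

Definition ccu_err (n : nat) (p : R) (P : proto (UIn n) (UIn n)) (S T : {set 'I_n}) : R :=
  Rsum (fun xy : bv n * bv n =>
    if run P (fSfun S, xy.1) (fSfun T, xy.2) != fSfun T xy then mu p xy.1 xy.2 else R0).

Definition simulate (n k : nat) (P : proto (UIn n) (UIn n)) : proto (SIn n) (SIn n) :=
  proto_trunc k (proto_map (fun a : SIn n => (fSfun a.1, a.2)) (fun b => (fSfun b.1, b.2)) P).

Section Simulation.

Variables (n k : nat) (p q : R).
Hypotheses (p_bounds : 0 < p < 1) (q_bounds : 0 < q <= 1).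

Lemma ccu_errE (P : proto (UIn n) (UIn n)) (S T : {set 'I_n}) :
  ccu_err p P S T = \big[Rplus/0]_(x : bv n) \big[Rplus/0]_(y : bv n)
    (if run P (fSfun S, x) (fSfun T, y) != fS T x y then mu p x y else 0).
Proof.
rewrite /ccu_err /Rsum (pair_bigA _ (fun x y =>
  if run P (fSfun S, x) (fSfun T, y) != fS T x y then mu p x y else 0)).
by apply: eq_bigr => [[x y]] _; rewrite ffunE.
Qed.

Lemma ccu_err_ge0 (P : proto (UIn n) (UIn n)) (S T : {set 'I_n}) : 0 <= ccu_err p P S T.
Proof.
apply: Rsum_ge0 => xy _; case: ifP => _; last exact: Rle_refl.
exact/Rlt_le/mu_gt0.
Qed.

Lemma cc_err_simulate_le (P : proto (UIn n) (UIn n)) :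
  (forall S T, close q S T -> forall x y, (bits P (fSfun S, x) (fSfun T, y) <= k)%nat) ->
  cc_err p q (simulate k P) <=
  \big[Rplus/0]_(S : {set 'I_n}) \big[Rplus/0]_(T : {set 'I_n})
     (if close q S T then nuS q S T * ccu_err p P S T else nuS q S T).
Proof.
move=> P_bits; rewrite /cc_err /Rsum (Rsum_pair_pair (fun a b =>
  if run (simulate k P) a b != Ffun a b then nu p q a b else 0)).
apply: Rsum_le => S _; apply: Rsum_le => T _.
have nuS_pos := @nuS_ge0 _ q S T (ltac:(lra)).
case: ifP => [ST_close | _].
  rewrite ccu_errE big_distrr; apply: Rsum_le => x _; rewrite big_distrr; apply: Rsum_le => y _.
  rewrite /simulate run_proto_trunc; last by rewrite bits_proto_map; apply: P_bits.
  by rewrite run_proto_map /Ffun nuE /=; case: ifP => _; right; ring.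
rewrite -[nuS q S T]Rmult_1_r -(Rsum_mu n p) big_distrr.
apply: Rsum_le => x _; rewrite big_distrr; apply: Rsum_le => y _.
rewrite nuE; case: ifP => _; first exact: Rle_refl.
exact/Rmult_le_pos/Rlt_le/mu_gt0.
Qed.

Lemma avg_cc_err_simulate_le (m : nat) (w : 'I_m -> R) (P : 'I_m -> proto (UIn n) (UIn n)) :
  (forall i, 0 <= w i) -> Rsum w = 1 ->
  (forall i S T, close q S T -> forall x y, (bits (P i) (fSfun S, x) (fSfun T, y) <= k)%nat) ->
  Rsum (fun i => w i * cc_err p q (simulate k (P i))) <=
  \big[Rplus/0]_(S : {set 'I_n}) \big[Rplus/0]_(T : {set 'I_n})
     (if close q S T then nuS q S T * Rsum (fun i => w i * ccu_err p (P i) S T)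
      else nuS q S T).
Proof.
move=> w_ge0 w_sum1 P_bits.
apply: (Rle_trans _ (Rsum (fun i => w i * \big[Rplus/0]_(S : {set 'I_n})
   \big[Rplus/0]_(T : {set 'I_n})
     (if close q S T then nuS q S T * ccu_err p (P i) S T else nuS q S T)))).
  by apply: Rsum_le => i _; apply: Rmult_le_compat_l => //; apply/cc_err_simulate_le/P_bits.
right; rewrite /Rsum.
under eq_bigr do rewrite big_distrr; rewrite exchange_big; apply: eq_bigr => S _.
under eq_bigr do rewrite big_distrr; rewrite exchange_big; apply: eq_bigr => T _.
case: ifP => _.
  by rewrite [RHS]big_distrr; apply: eq_bigr => i _ /=; ring.
by rewrite -[RHS]Rmult_1_r -w_sum1 /Rsum big_distrr; apply: eq_bigr => i _ /=; ring.
Qed.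

End Simulation.

Theorem mainTheorem10 :
  exists c : R, (0 < c)%R /\
    forall (n : nat) (p q eps : R),
      (0 < p < 1)%R -> (0 < q <= 1)%R -> (0 < eps)%R ->
      forall k : nat,
        CCU_le n p q (1 / 2 - eps) k ->
        CC_le n p q (1 / 2 - eps + Rpower 2 (- (c * q * INR n))) k.
Proof.
exists far_rate; split; first exact: far_rate_gt0.
move=> n p q eps p_bounds q_bounds _ k [m [w [P [w_ge0 [w_sum1 [P_err P_bits]]]]]].
have close_Fq S T : close q S T -> Fq q (fSfun S) (fSfun T).
  by move/closeP => ST_close; exists S, T.
have err_close S T : close q S T -> Rsum (fun i => w i * ccu_err p (P i) S T) <= 1 / 2 - eps.
  by move/close_Fq/P_err.
have bits_close i S T : close q S T -> forall x y, (bits (P i) (fSfun S, x) (fSfun T, y) <= k)%nat.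
  by move/close_Fq => ST_Fq x y; apply: P_bits => //; apply: mu_gt0.
have delta_ge0 : 0 <= 1 / 2 - eps.
  apply: Rle_trans (err_close set0 set0 _); last first.
    by apply/closeP; rewrite /symdiff setD0 setU0 cards0 /=; apply/Rmult_le_pos/pos_INR; lra.
  by apply: Rsum_ge0 => i _; apply/Rmult_le_pos/ccu_err_ge0.
have [i cc_err_le_avg] := exists_le_Rsum_avg (fun i => cc_err p q (simulate k (P i))) w_ge0 w_sum1.
exists (simulate k (P i)); split => [a b | ]; first exact: bits_proto_trunc.
apply: (Rle_trans _ _ _ cc_err_le_avg).
apply: (Rle_trans _ _ _ (avg_cc_err_simulate_le p_bounds q_bounds w_ge0 w_sum1 bits_close)).
exact: close_mixture_le q_bounds delta_ge0 err_close.
Qed.
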